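(* Let $\mathcal{A}$ be a unital semiprime algebra over a field $F$ with $\operatorname{char}(F)\neq2$. Then $\operatorname{QJDer}(\mathcal{A})=\operatorname{Cent}(\mathcal{A})+\operatorname{Der}(\mathcal{A})$.
   Context: $\mathcal{A}$ is semiprime if $a\mathcal{A}a=\{0\}$ implies $a=0$. $x\circ y=xy+yx$. $\operatorname{QJDer}(\mathcal{A})$: linear $f:\mathcal{A}\to\mathcal{A}$ for which there is a linear $h$ with $f(x)\circ y+x\circ f(y)=h(x\circ y)$ for all $x,y$. $\operatorname{Cent}(\mathcal{A})$: linear $f$ with $f(xy)=f(x)y=xf(y)$. $\operatorname{Der}(\mathcal{A})$: linear $d$ with $d(xy)=d(x)y+xd(y)$. Sums of sets of maps are sets of pointwise sums. *)

From HB Require Import structures.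
From mathcomp Require Import all_boot all_order all_algebra.
Set Implicit Arguments. Unset Strict Implicit. Unset Printing Implicit Defensive.
Import GRing.Theory.
Local Open Scope ring_scope.

Definition semiprime (R : pzRingType) : Prop :=
  forall a : R, (forall x : R, a * x * a = 0) -> a = 0.

Definition jprod (R : pzRingType) (x y : R) : R := x * y + y * x.

Definition QJDer (F : fieldType) (A : algType F) (f : A -> A) : Prop :=
  linear f /\
  exists h : A -> A, linear h /\
    forall x y : A, jprod (f x) y + jprod x (f y) = h (jprod x y).

Definition Cent (F : fieldType) (A : algType F) (f : A -> A) : Prop :=
  linear f /\ forall x y : A, f (x * y) = f x * y /\ f (x * y) = x * f y.

Definition Der (F : fieldType) (A : algType F) (d : A -> A) : Prop :=
  linear d /\ forall x y : A, d (x * y) = d x * y + x * d y.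

From HB Require Import structures.
From mathcomp Require Import all_boot all_order all_algebra.
From Stdlib Require Import FunctionalExtensionality.
Import GRing.Theory.
Local Open Scope ring_scope.
Set Implicit Arguments. Unset Strict Implicit. Unset Printing Implicit Defensive.

(* If g is centroidal and d a derivation, g + d satisfies the defining identity
   with h = 2g + d.  Conversely, putting y = 1 eliminates h, and with c := f 1
   the map d x := f x - c x has Jordan defect d(x o y) - d x o y - x o d y equal to
   -([[c,x],y] + [[c,y],x])/2.  The Jordan defect of any additive map satisfies
   the cocycle identity obtained from the linearized Jordan identity; two
   instances of it give [y, D^3 z] + 2 [D y, D^2 z] = 0 for D = ad c, from
   which semiprimeness yields D^3 = 0, then D^2 = 0, then D = 0, i.e. c is
   central.  Hence d is a Jordan derivation, and so a derivation by Herstein's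
   argument in Bresar's form for semiprime rings; f = c * _ + d. *)

(** * Normalization of noncommutative ring expressions *)

Module NCRing.
Section Normalize.
Variables (R : pzRingType) (phi : R -> R).
Hypothesis phiD : {morph phi : x y / x + y}.

Inductive expr :=
| Var of nat | Zero | One | Add of expr & expr | Opp of expr
| Mul of expr & expr | Muln of expr & nat | App of expr.

Fixpoint eval_expr (env : seq R) (e : expr) : R :=
  match e with
  | Var i => nth 0 env i
  | Zero => 0
  | One => 1
  | Add a b => eval_expr env a + eval_expr env b
  | Opp a => - eval_expr env a
  | Mul a b => eval_expr env a * eval_expr env b
  | Muln a n => eval_expr env a *+ n
  | App a => phi (eval_expr env a)
  end.

(* A letter is either a variable [inl i] or [phi] applied to a product of
   variables [inr w]; a normal form is a list of integer-weighted words. *)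
Definition letter := (nat + seq nat)%type.
Definition monomial := seq letter.
Definition polynomial := seq (int * monomial).

Definition eval_word (env : seq R) (w : seq nat) : R :=
  foldr (fun i r => nth 0 env i * r) 1 w.
Definition eval_letter (env : seq R) (l : letter) : R :=
  match l with inl i => nth 0 env i | inr w => phi (eval_word env w) end.
Definition eval_mono (env : seq R) (m : monomial) : R :=
  foldr (fun l r => eval_letter env l * r) 1 m.
Definition eval_poly (env : seq R) (p : polynomial) : R :=
  foldr (fun t r => eval_mono env t.2 *~ t.1 + r) 0 p.

Definition poly_mul (p q : polynomial) : polynomial :=
  flatten [seq [seq (t.1 * s.1, t.2 ++ s.2) | s <- q] | t <- p].

Definition word_of (m : monomial) : option (seq nat) :=
  foldr (fun l o => match l, o with inl i, Some w => Some (i :: w) | _, _ => None end)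
    (Some [::]) m.

Definition apply_phi (t : int * monomial) : int * monomial :=
  (t.1, if word_of t.2 is Some w then [:: inr w] else t.2).

Fixpoint normalize (e : expr) : polynomial :=
  match e with
  | Var i => [:: (1, [:: inl i])]
  | Zero => [::]
  | One => [:: (1, [::])]
  | Add a b => normalize a ++ normalize b
  | Opp a => [seq (- t.1, t.2) | t <- normalize a]
  | Mul a b => poly_mul (normalize a) (normalize b)
  | Muln a n => [seq (t.1 *+ n, t.2) | t <- normalize a]
  | App a => map apply_phi (normalize a)
  end.

(* [phi] can only be pushed through sums of products of variables. *)
Fixpoint well_formed (e : expr) : bool :=
  match e with
  | Var _ | Zero | One => true
  | Add a b | Mul a b => well_formed a && well_formed b
  | Opp a | Muln a _ => well_formed a
  | App a => well_formed a && all (fun t => word_of t.2 != None) (normalize a)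
  end.

Fixpoint insert_term (t : int * monomial) (p : polynomial) : polynomial :=
  if p is s :: p' then
    if s.2 == t.2 then (s.1 + t.1, s.2) :: p' else s :: insert_term t p'
  else [:: t].

Definition collect (p : polynomial) : polynomial :=
  filter (fun t => t.1 != 0) (foldr insert_term [::] p).

Definition nc_check (e1 e2 : expr) : bool :=
  [&& well_formed e1, well_formed e2 & nilp (collect (normalize (Add e1 (Opp e2))))].

Lemma phi0 : phi 0 = 0.
Proof. by apply: (addrI (phi 0)); rewrite -phiD !addr0. Qed.

Lemma phiN x : phi (- x) = - phi x.
Proof. by apply: (addrI (phi x)); rewrite -phiD !subrr phi0. Qed.

Lemma phiMz x k : phi (x *~ k) = phi x *~ k.
Proof.
have phiMn n : phi (x *+ n) = phi x *+ n.
  by elim: n => [|n IH]; rewrite ?mulr0n ?phi0 // !mulrS phiD IH.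
by case: k => n; rewrite ?NegzE ?mulrNz ?phiN phiMn.
Qed.

Lemma eval_mono_cat env m1 m2 :
  eval_mono env (m1 ++ m2) = eval_mono env m1 * eval_mono env m2.
Proof. by elim: m1 => [|l m IH] /=; rewrite ?mul1r // IH mulrA. Qed.

Lemma eval_poly_cat env p q : eval_poly env (p ++ q) = eval_poly env p + eval_poly env q.
Proof. by elim: p => [|t p IH] /=; rewrite ?add0r // IH addrA. Qed.

Lemma eval_poly_mul env p q : eval_poly env (poly_mul p q) = eval_poly env p * eval_poly env q.
Proof.
elim: p => [|t p IH] /=; first by rewrite mul0r.
rewrite eval_poly_cat IH mulrDl; congr (_ + _); elim: q {IH} => [|s q IHq] /=.
  by rewrite mulr0.
rewrite IHq mulrDr eval_mono_cat; congr (_ + _).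
by rewrite mulrzAl mulrzAr mulrzA_C mulrzA.
Qed.

Lemma word_ofP env m w : word_of m = Some w -> eval_mono env m = eval_word env w.
Proof.
elim: m w => [|[i|v] m IH] [|j w] //=; case E: (word_of m) => [u|] // [<- <-].
by rewrite (IH u).
Qed.

Lemma normalize_sound env e :
  well_formed e -> eval_poly env (normalize e) = eval_expr env e.
Proof.
elim: e => [i||| a IHa b IHb | a IHa | a IHa b IHb | a IHa n | a IHa] /=.
- by rewrite mulr1 addr0.
- by [].
- by rewrite addr0.
- by case/andP => wa wb; rewrite eval_poly_cat IHa // IHb.
- move=> wa; rewrite -IHa //; elim: (normalize a) => [|t p IH] /=; first by rewrite oppr0.
  by rewrite IH opprD mulrNz.
- by case/andP => wa wb; rewrite eval_poly_mul IHa // IHb.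
- move=> wa; rewrite -IHa //; elim: (normalize a) => [|t p IH] /=; first by rewrite mul0rn.
  by rewrite IH mulrnDl -mulr_natr mulrzA mulrz_nat.
- case/andP => wa; rewrite -IHa //; elim: (normalize a) => [|t p IH] /=; first by rewrite phi0.
  case/andP; case E: (word_of t.2) => [w|] // _ wp.
  by rewrite IH // phiD phiMz (word_ofP env E) /= mulr1.
Qed.

Lemma eval_insert_term env t p :
  eval_poly env (insert_term t p) = eval_mono env t.2 *~ t.1 + eval_poly env p.
Proof.
elim: p => [|s p IH] //=; case: eqP => [E|_] /=; last by rewrite IH addrCA.
by rewrite mulrzDr E addrA [_ *~ s.1 + _]addrC.
Qed.

Lemma eval_collect env p : eval_poly env (collect p) = eval_poly env p.
Proof.
have -> : eval_poly env p = eval_poly env (foldr insert_term [::] p).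
  by elim: p => [|t p IH] //=; rewrite eval_insert_term IH.
rewrite /collect; elim: (foldr _ _ _) => [|t q IH] //=.
by case: (t.1 =P 0) => [t0|_] /=; rewrite IH // t0 mulr0z add0r.
Qed.

Lemma nc_checkP env e1 e2 : nc_check e1 e2 -> eval_expr env e1 = eval_expr env e2.
Proof.
case/and3P => w1 w2 /nilP E; apply/eqP; rewrite -subr_eq0; apply/eqP.
have := normalize_sound env (e := Add e1 (Opp e2)); rewrite /= w1 w2 -eval_collect E.
by move=> <-.
Qed.

End Normalize.

Ltac find_index x env :=
  lazymatch env with
  | nil => constr:(@None nat)
  | cons (x, ?k) _ => constr:(Some k)
  | cons _ ?env' => find_index x env'
  end.

Ltac reify phi env t :=
  lazymatch t with
  | @Algebra.add _ ?a ?b =>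
      lazymatch reify phi env a with (?env1, ?ea) =>
      lazymatch reify phi env1 b with (?env2, ?eb) => constr:((env2, Add ea eb)) end end
  | @GRing.mul _ ?a ?b =>
      lazymatch reify phi env a with (?env1, ?ea) =>
      lazymatch reify phi env1 b with (?env2, ?eb) => constr:((env2, Mul ea eb)) end end
  | @Algebra.opp _ ?a =>
      lazymatch reify phi env a with (?env1, ?ea) => constr:((env1, Opp ea)) end
  | @Algebra.natmul _ ?a ?n =>
      lazymatch reify phi env a with (?env1, ?ea) => constr:((env1, Muln ea n)) end
  | @Algebra.zero _ => constr:((env, Zero))
  | @GRing.one _ => constr:((env, One))
  | phi ?a =>
      lazymatch reify phi env a with (?env1, ?ea) => constr:((env1, App ea)) end
  | _ =>
      lazymatch find_index t env with
      | Some ?k => constr:((env, Var k))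
      | None =>
          let k := lazymatch env with nil => constr:(0%N) | cons (_, ?k) _ => constr:(S k) end in
          constr:((cons (t, k) env, Var k))
      end
  end.

End NCRing.

(* Proves an identity of noncommutative ring expressions in which the
   additive map [phi] may be applied to polynomials in the atoms. *)
Ltac nc_ring_with phi phiD :=
  lazymatch goal with
  | |- @eq ?T ?l ?r =>
      let phi := constr:(phi : T -> T) in
      lazymatch NCRing.reify phi (@nil (T * nat)) l with (?env1, ?el) =>
      lazymatch NCRing.reify phi env1 r with (?env, ?er) =>
        change (NCRing.eval_expr phi (map fst (rev env)) el
                = NCRing.eval_expr phi (map fst (rev env)) er);
        apply: (NCRing.nc_checkP phiD); vm_compute; reflexivity
      end end
  end.

Ltac nc_ring :=
  lazymatch goal with
  | |- @eq ?T _ _ => nc_ring_with (@id T) (fun x y : T => @erefl T (x + y))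
  end.

Lemma subr0_from (V : zmodType) (a b c : V) : a = b -> c = a - b -> c = 0.
Proof. by move=> -> ->; rewrite subrr. Qed.

Lemma two_torsion_free (F : fieldType) (V : lmodType F) :
  2%N \notin [pchar F] -> forall v : V, v *+ 2 = 0 -> v = 0.
Proof.
move=> hchar v v2; have two_nz : (2%:R : F) != 0.
  by apply: contra hchar => two0; rewrite inE /= two0.
by rewrite -[v]scale1r -(mulVf two_nz) -scalerA scaler_nat v2 scaler0.
Qed.

Definition ad (R : pzRingType) (c x : R) : R := c * x - x * c.

(** * Semiprime rings *)

Section Semiprime.
Variable R : pzRingType.
Hypothesis two_free : forall a : R, a *+ 2 = 0 -> a = 0.
Hypothesis R_semiprime : semiprime R.

Lemma semiprime_sandwich_sym (a b : R) :
  (forall z, a * z * b + b * z * a = 0) -> forall z, a * z * b = 0.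
Proof.
move=> H z; apply: R_semiprime => w; apply: two_free.
rewrite [LHS](_ : _ = - ((a * (z * b * w) * b + b * (z * b * w) * a) * z * a)
   + (a * (z * b * w * a * z) * b + b * (z * b * w * a * z) * a)
   + a * z * b * w * (a * z * b + b * z * a)); last by nc_ring.
by rewrite !H !(mul0r, mulr0, oppr0, addr0).
Qed.

Lemma semiprime_sandwich_linear (A B : R -> R) :
    {morph A : x y / x + y} -> {morph B : x y / x + y} ->
  (forall x z, A x * z * B x = 0) -> forall x u z, A x * z * B u = 0.
Proof.
move=> AD BD H x u z.
have cross : A x * z * B u + A u * z * B x = 0.
  rewrite [LHS](_ : _ = (A x + A u) * z * (B x + B u) - A x * z * B x - A u * z * B u);
    last by nc_ring.
  by rewrite -AD -BD !H !subr0.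
apply: R_semiprime => w.
rewrite [LHS](_ : _ = A x * z * B u * w * (A x * z * B u + A u * z * B x)
   - A x * (z * B u * w * A u * z) * B x); last by nc_ring.
by rewrite cross H mulr0 subr0.
Qed.

Lemma semiprime_central (a : R) :
  (forall z u v, a * z * ad u v = 0) -> forall t, a * t = t * a.
Proof.
move=> H t; apply/subr0_eq; apply: R_semiprime => w.
rewrite [LHS](_ : _ = a * (t * w) * ad a t - t * (a * w * ad a t));
  last by rewrite /ad; nc_ring.
by rewrite !H mulr0 subr0.
Qed.

Lemma semiprime_central_nil (g : R) :
  (forall t, g * t = t * g) -> g * g * g = 0 -> g = 0.
Proof.
move=> gC g3; have g2C t : g * g * t = t * (g * g).
  by rewrite -mulrA gC mulrA gC -mulrA.
have g2 : g * g = 0 by apply: R_semiprime => w; rewrite -mulrA -g2C !mulrA g3 !mul0r.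
by apply: R_semiprime => w; rewrite -mulrA -gC mulrA g2 mul0r.
Qed.

End Semiprime.

Section InnerDerivation.
Variable R : pzRingType.
Hypothesis two_free : forall a : R, a *+ 2 = 0 -> a = 0.
Hypothesis R_semiprime : semiprime R.
Variable c : R.
Local Notation D := (ad c).

Lemma ad_eq0_of_sqr (D2 : forall z, D (D z) = 0) y : D y = 0.
Proof.
have DD u w : D u * D w = 0.
  apply: two_free; rewrite [LHS](_ : _ = D (D (u * w)) - D (D u) * w - u * D (D w));
    last by rewrite /ad; nc_ring.
  by rewrite !D2 mul0r mulr0 !subr0.
apply: R_semiprime => w.
rewrite [LHS](_ : _ = D y * D (w * y) - D y * D w * y); last by rewrite /ad; nc_ring.
by rewrite !DD mul0r subr0.
Qed.

Lemma ad_sqr_eq0 (D3 : forall z, D (D (D z)) = 0)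
  (D1D2 : forall y z, ad (D y) (D (D z)) = 0) z : D (D z) = 0.
Proof.
have D2D2 u v : D (D u) * D (D v) = 0.
  rewrite [LHS](_ : _ = ad (D v) (D (D u)) * c - ad (D v) (D (D (u * c))));
    last by rewrite /ad; nc_ring.
  by rewrite !D1D2 mul0r subr0.
have D2tD2 t : D (D z) * t * D (D z) + (D (D z) * D z * D t) *+ 2 = 0.
  rewrite [LHS](_ : _ = D (D (z * t)) * D (D z) - z * (D (D t) * D (D z))
      - (D z * ad (D t) (D (D z))) *+ 2 - (ad (D z) (D (D z)) * D t) *+ 2);
    last by rewrite /ad; nc_ring.
  by rewrite !D2D2 !D1D2 !(mulr0, mul0r, mul0rn, subr0).
have D2D1tD2 t : D (D z) * D z * t * D (D z) = 0.
  apply: two_free.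
  rewrite [LHS](_ : _ = (D (D z) * (t * D z) * D (D z) + (D (D z) * D z * D (t * D z)) *+ 2)
      - (D (D z) * t * D (D z) + (D (D z) * D z * D t) *+ 2) * D z
      - D (D z) * t * ad (D z) (D (D z))); last by rewrite /ad; nc_ring.
  by rewrite !D2tD2 D1D2 mulr0 mul0r !subr0.
apply: R_semiprime => t; apply: R_semiprime => w.
rewrite [LHS](_ : _ = D (D z) * t * (D (D z) * w * D (D z) + (D (D z) * D z * D w) *+ 2)
    * t * D (D z) - (D (D z) * t * (D (D z) * D z * (D w * t) * D (D z))) *+ 2);
  last by rewrite /ad; nc_ring.
by rewrite D2tD2 D2D1tD2 !(mulr0, mul0r, mul0rn, subr0).
Qed.

Lemma ad_cube_eq0
  (H : forall y z, ad y (D (D (D z))) + ad (D y) (D (D z)) *+ 2 = 0) z : D (D (D z)) = 0.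
Proof.
have D3D1 w : D (D (D z)) * D w = 0.
  apply: two_free.
  rewrite [LHS](_ : _ = (ad (c * w) (D (D (D z))) + ad (D (c * w)) (D (D z)) *+ 2)
      - c * (ad w (D (D (D z))) + ad (D w) (D (D z)) *+ 2)
      - (ad c (D (D (D z))) + ad (D c) (D (D z)) *+ 2) * w); last by rewrite /ad; nc_ring.
  by rewrite !H mulr0 mul0r !subr0.
apply: R_semiprime => w.
rewrite [LHS](_ : _ = D (D (D z)) * D (w * D (D z)) - D (D (D z)) * D w * D (D z));
  last by rewrite /ad; nc_ring.
by rewrite !D3D1 mul0r subr0.
Qed.

Lemma ad_central
  (H : forall y z, ad y (D (D (D z))) + ad (D y) (D (D z)) *+ 2 = 0) x : c * x = x * c.
Proof.
have D3 := ad_cube_eq0 H.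
have D1D2 y z : ad (D y) (D (D z)) = 0.
  by apply: two_free; move: (H y z); rewrite D3 [ad y 0]/ad mulr0 mul0r subrr add0r.
by apply/subr0_eq; apply: ad_eq0_of_sqr; apply: ad_sqr_eq0.
Qed.

End InnerDerivation.

(** * Jordan derivations *)

Definition der_defect (R : pzRingType) (d : R -> R) (x y : R) : R :=
  d (x * y) - d x * y - x * d y.

Section JordanDerivation.
Variable R : pzRingType.
Hypothesis two_free : forall a : R, a *+ 2 = 0 -> a = 0.
Variable d : {additive R -> R}.
Hypothesis d_jordan : forall x y, d (jprod x y) = jprod (d x) y + jprod x (d y).

Lemma jordan_triple u v w :
  d (u * v * w + w * v * u) =
  d u * v * w + u * d v * w + u * v * d w + d w * v * u + w * d v * u + w * v * d u.
Proof.
apply/subr0_eq/two_free; rewrite mulrnBl -raddfMn.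
rewrite (_ : (u * v * w + w * v * u) *+ 2
    = jprod u (jprod v w) + jprod (jprod u v) w - jprod v (jprod u w));
  last by rewrite /jprod; nc_ring.
by rewrite raddfB raddfD !d_jordan /jprod; nc_ring.
Qed.

Lemma jordan_sandwich x y : d (x * y * x) = d x * y * x + x * d y * x + x * y * d x.
Proof.
apply/subr0_eq/two_free; rewrite mulrnBl -raddfMn mulr2n jordan_triple.
by nc_ring.
Qed.

Lemma der_defect_anti x y : der_defect d y x = - der_defect d x y.
Proof.
apply/subr0_eq; apply: (subr0_from (d_jordan x y)).
by rewrite /der_defect /jprod; nc_ring_with d (raddfD d).
Qed.

Lemma herstein_identity x y z :
  der_defect d x y * z * ad x y + ad x y * z * der_defect d x y = 0.
Proof.
have dyx : d (y * x) = jprod (d x) y + jprod x (d y) - d (x * y).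
  by rewrite -d_jordan raddfD addrAC subrr add0r.
have W : d (x * (y * z * y) * x) + d (y * (x * z * x) * y)
    = d (x * y * z * (y * x) + y * x * z * (x * y)).
  by rewrite -raddfD; congr (d _); nc_ring.
rewrite !jordan_sandwich jordan_triple dyx in W.
by apply: (subr0_from W); rewrite /der_defect /ad /jprod; nc_ring.
Qed.

Hypothesis R_semiprime : semiprime R.

Lemma der_defect_comm x y z u v : der_defect d x y * z * ad u v = 0.
Proof.
have defectD1 y' : {morph der_defect d ^~ y' : a b / a + b}.
  by move=> a b; rewrite /der_defect; nc_ring_with d (raddfD d).
have defectD2 x' : {morph der_defect d x' : a b / a + b}.
  by move=> a b; rewrite /der_defect; nc_ring_with d (raddfD d).
have adD1 (y' : R) : {morph (fun a => ad a y') : a b / a + b}.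
  by move=> a b; rewrite /ad; nc_ring.
have adD2 (x' : R) : {morph ad x' : a b / a + b} by move=> a b; rewrite /ad; nc_ring.
have diag x' y' z' : der_defect d x' y' * z' * ad x' y' = 0.
  by apply: semiprime_sandwich_sym => // z''; apply: herstein_identity.
have cross y' x' u' z' : der_defect d x' y' * z' * ad u' y' = 0.
  apply: (semiprime_sandwich_linear R_semiprime (defectD1 y') (adD1 y')) => ? ?.
  exact: diag.
by apply: (semiprime_sandwich_linear R_semiprime (defectD2 x) (adD2 u)) => ? ?; apply: cross.
Qed.

Lemma der_defect_eq0 x y : der_defect d x y = 0.
Proof.
set g := der_defect d x y; set k := ad x y.
have gC : forall t, g * t = t * g.
  by apply: semiprime_central => // z u v; apply: der_defect_comm.
have g_ad p q : g * ad p q = 0 by rewrite -[g]mulr1; apply: der_defect_comm.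
have two_g : g *+ 2 = d k - ad (d x) y - ad x (d y).
  apply/subr0_eq; apply: (subr0_from (der_defect_anti y x)).
  by rewrite /g /k /der_defect /ad; nc_ring_with d (raddfD d).
have g2_dk : g * g * d k = 0.
  have jk : jprod (d g) k + jprod g (d k) = 0.
    by rewrite -d_jordan /jprod -gC g_ad addr0 raddf0.
  apply: two_free; rewrite [LHS](_ : _ = g * (jprod (d g) k + jprod g (d k))
      - (g * d g - d g * g) * k - d g * (g * k) - (g * k) * d g - g * (d k * g - g * d k));
    last by rewrite /jprod; nc_ring.
  by rewrite jk (gC (d g)) (gC (d k)) g_ad !subrr !(mulr0, mul0r, subr0).
apply: semiprime_central_nil => //; apply: two_free.
rewrite [LHS](_ : _ = g * g * (g *+ 2)); last by nc_ring.
rewrite two_g [LHS](_ : _ = g * g * d k - g * (g * ad (d x) y) - g * (g * ad x (d y)));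
  last by nc_ring.
by rewrite g2_dk !g_ad !mulr0 !subr0.
Qed.

Lemma jordan_derivation_is_derivation x y : d (x * y) = d x * y + x * d y.
Proof. by apply/subr0_eq; rewrite opprD addrA; apply: der_defect_eq0. Qed.

End JordanDerivation.

(** * Quasi-Jordan derivations *)

Section JordanCocycle.
Variable R : pzRingType.

Definition jdefect (d : R -> R) (x y : R) : R :=
  d (jprod x y) - jprod (d x) y - jprod x (d y).

(* The condition satisfied by the Jordan defect of any additive map, obtained
   by applying the map to both sides of the linearized Jordan identity
   ((a o b) o y) o e + cyclic = (a o b) o (y o e) + cyclic. *)
Definition jcocycle (J : R -> R -> R) (a b e y : R) : R :=
  let t p q r :=
    jprod (jprod (J p q) y) r + jprod (J (jprod p q) y) r + J (jprod (jprod p q) y) r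
    - (jprod (J p q) (jprod y r) + jprod (jprod p q) (J y r) + J (jprod p q) (jprod y r)) in
  t a b e + t b e a + t e a b.

Lemma jdefect_cocycle (d : R -> R) : {morph d : x y / x + y} ->
  forall a b e y, jcocycle (jdefect d) a b e y = 0.
Proof. by move=> dD a b e y; rewrite /jcocycle /jdefect /jprod /=; nc_ring_with d dD. Qed.

End JordanCocycle.

Definition ad2_sym (R : pzRingType) (c x y : R) : R := ad (ad c x) y + ad (ad c y) x.

Section QuasiJordanDerivation.
Variable R : pzRingType.
Hypothesis two_free : forall a : R, a *+ 2 = 0 -> a = 0.
Hypothesis R_semiprime : semiprime R.
Variables f h : {additive R -> R}.
Hypothesis f_qj : forall x y, jprod (f x) y + jprod x (f y) = h (jprod x y).

Definition qj_der x := f x - f 1 * x.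

Fact qj_der_is_zmod_morphism : zmod_morphism qj_der.
Proof. by move=> x y; rewrite /qj_der; nc_ring_with f (raddfD f). Qed.

HB.instance Definition _ := GRing.isZmodMorphism.Build R R qj_der qj_der_is_zmod_morphism.

Lemma qj_der_jdefect x y : ad2_sym (f 1) x y = - (jdefect qj_der x y *+ 2).
Proof.
have h_f u : h u *+ 2 = f u *+ 2 + jprod u (f 1).
  rewrite mulr2n; have := f_qj u 1; rewrite /jprod !mulr1 !mul1r raddfD => <-.
  by nc_ring.
have e : (jprod (f x) y + jprod x (f y)) *+ 2 = f (jprod x y) *+ 2 + jprod (jprod x y) (f 1).
  by rewrite f_qj h_f.
apply/subr0_eq; apply: (subr0_from (esym e)).
by rewrite /jdefect /qj_der /ad2_sym /ad /jprod; nc_ring_with f (raddfD f).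
Qed.

Lemma ad2_sym_cocycle a b e y : jcocycle (ad2_sym (f 1)) a b e y = 0.
Proof.
rewrite [LHS](_ : _ = - (jcocycle (jdefect qj_der) a b e y *+ 2));
  last by rewrite /jcocycle /= !qj_der_jdefect /jprod; nc_ring.
by rewrite (jdefect_cocycle (d := qj_der) (raddfD _)) mul0rn oppr0.
Qed.

Lemma qj_ad_cubic y z :
  ad y (ad (f 1) (ad (f 1) (ad (f 1) z))) + ad (ad (f 1) y) (ad (f 1) (ad (f 1) z)) *+ 2 = 0.
Proof.
apply: two_free.
rewrite [LHS](_ : _ = jcocycle (ad2_sym (f 1)) (f 1) y z (f 1)
    - jcocycle (ad2_sym (f 1)) (f 1) (f 1) y z);
  last by rewrite /jcocycle /ad2_sym /ad /jprod /=; nc_ring.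
by rewrite !ad2_sym_cocycle subrr.
Qed.

Lemma qj_center_central x : f 1 * x = x * f 1.
Proof. exact: (ad_central two_free R_semiprime qj_ad_cubic). Qed.

Lemma qj_der_jordan x y : qj_der (jprod x y) = jprod (qj_der x) y + jprod x (qj_der y).
Proof.
have ad_f1 u : ad (f 1) u = 0 by rewrite /ad qj_center_central subrr.
have : jdefect qj_der x y = 0.
  by apply: two_free; apply: oppr_inj; rewrite -qj_der_jdefect /ad2_sym !ad_f1 /ad;
    nc_ring.
by rewrite /jdefect -addrA -opprD => /subr0_eq.
Qed.

Lemma qj_der_derivation x y : qj_der (x * y) = qj_der x * y + x * qj_der y.
Proof. exact: (jordan_derivation_is_derivation two_free qj_der_jordan R_semiprime). Qed.

End QuasiJordanDerivation.

Section AlgebraMaps.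
Variables (F : fieldType) (A : algType F).

Lemma Cent_mull (c : A) : (forall x, c * x = x * c) -> Cent (fun x => c * x).
Proof.
move=> cC; split; first by move=> a u v; rewrite mulrDr scalerAr.
by move=> x y; split; rewrite mulrA // cC -mulrA.
Qed.

Lemma linear_sub_mull (f : A -> A) (c : A) : linear f -> linear (fun x => f x - c * x).
Proof. by move=> f_lin a u v /=; rewrite f_lin mulrDr -scalerAr scalerBr opprD addrACA. Qed.

Lemma Cent_add_Der_QJDer (g d : A -> A) : Cent g -> Der d -> QJDer (fun x => g x + d x).
Proof.
have linD (k : A -> A) : linear k -> {morph k : u v / u + v}.
  by move=> k_lin u v; have := k_lin 1 u v; rewrite !scale1r.
case=> g_lin g_cent [d_lin d_der]; split.
  by move=> a u v /=; rewrite g_lin d_lin scalerDr; nc_ring.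
exists (fun x => g x *+ 2 + d x); split.
  by move=> a u v /=; rewrite g_lin d_lin scalerDr -scalerMnr mulrnDl; nc_ring.
move=> x y /=; rewrite /jprod (linD g g_lin) (linD d d_lin) !d_der.
have g2 u w : g (u * w) *+ 2 = g u * w + u * g w.
  by case: (g_cent u w) => gl gr; rewrite mulr2n {1}gl gr.
by rewrite mulrnDl !g2; nc_ring.
Qed.

End AlgebraMaps.

Theorem corollary4p6 (F : fieldType) (A : algType F)
  (hchar : 2%N \notin [pchar F]) (hsp : semiprime A) :
  forall f : A -> A,
    QJDer f <-> exists g d : A -> A, Cent g /\ Der d /\ f = (fun x => g x + d x).
Proof.
have two_free := two_torsion_free (V := A) hchar.
move=> f; split; last by case=> g [d [Cg [Dd ->]]]; apply: Cent_add_Der_QJDer.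
case=> f_lin [h [h_lin f_qj]].
pose fL : {linear A -> A} := HB.pack f (GRing.isLinear.Build F A A *:%R f f_lin).
pose hL : {linear A -> A} := HB.pack h (GRing.isLinear.Build F A A *:%R h h_lin).
have c_central := qj_center_central two_free hsp (f := fL) (h := hL) f_qj.
have d_der := qj_der_derivation two_free hsp (f := fL) (h := hL) f_qj.
exists (fun x => f 1 * x), (qj_der fL); split; first exact: Cent_mull.
split; first by split; [exact: linear_sub_mull | exact: d_der].
by apply: functional_extensionality => x; rewrite /qj_der addrC subrK.
Qed.
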